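(* Let $n\ge2$, $r\ge1$, $q_1,q_2\in\mathbb{C}$ with $q_1q_2\ne0$ and $q=-q_2/q_1$ not a root of unity, and $[n]_q=1+q+\cdots+q^{n-1}$. Then the rules $s_i\cdot(v_1\otimes\cdots\otimes v_r)=v_1\otimes\cdots\otimes v_{i+1}\otimes v_i\otimes\cdots\otimes v_r$ (swap of the $i$th and $(i+1)$st factors, $1\le i\le r-1$) and $p_j\cdot(v_1\otimes\cdots\otimes v_r)=v_1\otimes\cdots\otimes Pv_j\otimes\cdots\otimes v_r$ ($1\le j\le r$) extend to a well-defined structure of left $\mathcal{P}'_r([n]_q)$-module on $\mathbf{E}^{\otimes r}$.
   Context: $\mathbf{E}=\mathbb{C}^n$ with basis $e_1,\dots,e_n$; $P\in\operatorname{End}(\mathbf{E})$ is given by $Pe_j=q^{j-1}(e_1+\cdots+e_n)$. Partial permutations of $\{1,\dots,r\}$ are bijections $d:X\to Y$ between subsets $X=\mathrm{dom}(d)$, $Y=\mathrm{im}(d)$, written on the right and composed by $x(d_1\circ d_2)=(xd_1)d_2$. For $z\ne0$, $\mathcal{P}'_r(z)$ is the algebra with basis the partial permutations and product $d_1d_2=z^N(d_1\circ d_2)$, $N=r-|\mathrm{im}(d_1)\cup\mathrm{dom}(d_2)|$ (the subalgebra of the partition algebra spanned by partial-permutation diagrams). It is generated by $s_i$ (the permutation swapping $i,i+1$) and $p_j$ (the identity map of $\{1,\dots,r\}\setminus\{j\}$). *)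

From mathcomp Require Import all_boot all_order all_algebra.
From mathcomp Require Import reals.
From mathcomp.real_closed Require Import complex.
Set Implicit Arguments. Unset Strict Implicit. Unset Printing Implicit Defensive.
Import Order.TTheory GRing.Theory Num.Theory.
Local Open Scope ring_scope.

(* ---------- Partial permutations of {0,...,r-1} ---------------------------
   A partial permutation d : X -> Y is encoded as d : {ffun 'I_r -> option 'I_r}
   with d x = Some (x d) for x in dom(d), None otherwise; it must be injective
   on its domain. Maps are written on the right. *)
Definition pperm (r : nat) := {ffun 'I_r -> option 'I_r}.

Definition is_pperm (r : nat) (d : pperm r) : bool :=
  [forall x, forall y, (d x != None) ==> (d x == d y) ==> (x == y)].

Definition pp_dom (r : nat) (d : pperm r) : {set 'I_r} := [set x | d x != None].
Definition pp_im (r : nat) (d : pperm r) : {set 'I_r} :=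
  [set y | [exists x, d x == Some y]].

Definition pp_comp (r : nat) (d1 d2 : pperm r) : pperm r :=
  [ffun x => obind (fun y => d2 y) (d1 x)].

(* exponent N = r - |im(d1) u dom(d2)| in the product d1 d2 = z^N (d1 o d2) *)
Definition pp_N (r : nat) (d1 d2 : pperm r) : nat :=
  (r - #|pp_im d1 :|: pp_dom d2|)%N.

Definition pp_id (r : nat) : pperm r := [ffun x => Some x].

(* s_i : swaps i and i+1 (0-based i, with i+1 < r) *)
Definition swapo (r : nat) (i j x : 'I_r) : 'I_r :=
  if x == i then j else if x == j then i else x.

Definition pp_s (r : nat) (i j : 'I_r) : pperm r := [ffun x => Some (swapo i j x)].

Definition pp_p (r : nat) (j : 'I_r) : pperm r :=
  [ffun x => if x == j then None else Some x].

(* ---------- Operators on E^{(x) r}, E = C^n -----------------------------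
   The basis of E^{(x) r} is e_{w 0} (x) ... (x) e_{w (r-1)}, w : 'I_r -> 'I_n.
   An endomorphism is given by its matrix A u w (coefficient of basis vector u
   in the image of basis vector w). *)
Definition word (n r : nat) := {ffun 'I_r -> 'I_n}.
Definition op (C : Type) (n r : nat) := word n r -> word n r -> C.

Definition op_mul (C : nzRingType) (n r : nat) (A B : op C n r) : op C n r :=
  fun u w => \sum_(v : word n r) A u v * B v w.
Definition op_one (C : nzRingType) (n r : nat) : op C n r :=
  fun u w => (u == w)%:R.
Definition op_scale (C : nzRingType) (n r : nat) (c : C) (A : op C n r) : op C n r :=
  fun u w => c * A u w.

(* action of s_i: swap of the i-th and j-th tensor factors:
   e_w |-> e_{w o (i j)}, i.e. new factor i is old factor j *)
Definition op_swap (C : nzRingType) (n r : nat) (i j : 'I_r) : op C n r :=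
  fun u w => (u == [ffun x => w (swapo i j x)])%:R.

(* action of P on the j-th tensor factor, where P e_k = q^k (e_0+...+e_{n-1})
   (0-based k; this is P e_k = q^{k-1}(e_1+...+e_n) in 1-based indexing). *)
Definition op_P (C : nzRingType) (n r : nat) (q : C) (j : 'I_r) : op C n r :=
  fun u w => if [forall x, (x != j) ==> (u x == w x)] then q ^+ (w j : nat) else 0.

Definition qint (C : nzRingType) (n : nat) (q : C) : C := \sum_(k < n) q ^+ k.

From mathcomp Require Import all_boot all_order all_algebra.
From mathcomp Require Import reals.
From mathcomp.real_closed Require Import complex.
From mathcomp Require Import ring.
From Stdlib Require Import FunctionalExtensionality.
Set Implicit Arguments. Unset Strict Implicit. Unset Printing Implicit Defensive.
Import Order.TTheory GRing.Theory Num.Theory.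
Local Open Scope ring_scope.

(* The basis partial permutation d acts on basis tensors by
     d . e_w = (prod_(t notin im d) q^(w t)) f_0 (x) ... (x) f_(r-1),
   with f_x = e_(w (x d)) for x in dom d and f_x = e_0 + ... + e_(n-1)
   otherwise, as P e_k = q^k (e_0 + ... + e_(n-1)) dictates.  Expanding
   rho(d1) rho(d2) e_w over the intermediate basis tensors e_v, the sum factors
   over the positions t: the coordinate v t is forced by w when t is in dom d2,
   by the output when t is in im d1, and otherwise runs freely against the
   weight q^(v t), contributing one factor [n]_q for each t outside
   im d1 u dom d2. *)

Lemma prodr_nat_forall (C : comNzSemiRingType) (I : finType) (b : pred I) :
  \prod_i ((b i)%:R : C) = [forall i, b i]%:R.
Proof.
have [/forallP bT | /forallPn [i bFi]] := boolP [forall i, b i].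
  by rewrite big1 // => i _; rewrite bT.
by rewrite (bigD1 i) //= (negbTE bFi) mul0r.
Qed.

Lemma sumr_delta (C : comNzSemiRingType) n (F : 'I_n -> C) c :
  \sum_k (k == c)%:R * F k = F c.
Proof.
rewrite (bigD1 c) //= eqxx mul1r big1 ?addr0 // => k /negbTE ->.
by rewrite mul0r.
Qed.

Lemma op_ext (C : Type) n r (A B : op C n r) : (forall u w, A u w = B u w) -> A = B.
Proof.
move=> eqAB; apply: functional_extensionality => u.
by apply: functional_extensionality => w; apply: eqAB.
Qed.

Section PartialPermutations.
Variable r : nat.
Implicit Types (d : pperm r) (x y t : 'I_r).

Lemma is_pperm_inj d x y t : is_pperm d -> d x = Some t -> d y = Some t -> x = y.
Proof.
move=> /forallP /(_ x) /forallP /(_ y) injd dx dy.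
by rewrite dx dy eqxx /= in injd; apply/eqP.
Qed.

Lemma pp_imP d t : reflect (exists x, d x = Some t) (t \in pp_im d).
Proof. by rewrite inE; apply: (iffP existsP) => -[x /eqP dx]; exists x. Qed.

Lemma pp_im_imset d : pp_im d = [set odflt x (d x) | x in pp_dom d].
Proof.
apply/setP => t; apply/pp_imP/imsetP => [[x dx] | [x]].
  by exists x; rewrite ?inE dx.
by rewrite inE; case dx: (d x) => [y|] //= _ ->; exists x.
Qed.

Lemma pp_im_comp d1 d2 t y : is_pperm d2 -> d2 t = Some y ->
  (y \in pp_im (pp_comp d1 d2)) = (t \in pp_im d1).
Proof.
move=> pd2 d2t; apply/pp_imP/pp_imP => -[x].
  rewrite ffunE; case d1x: (d1 x) => [t'|] //= d2t'.
  by exists x; rewrite d1x (is_pperm_inj pd2 d2t' d2t).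
by move=> d1x; exists x; rewrite ffunE d1x /= d2t.
Qed.

Lemma pp_im_compS d1 d2 : pp_im (pp_comp d1 d2) \subset pp_im d2.
Proof.
apply/subsetP => y /pp_imP [x]; rewrite ffunE.
by case: (d1 x) => [t|] //= d2t; apply/pp_imP; exists t.
Qed.

Lemma prod_pp_dom (C : comNzSemiRingType) d (G : 'I_r -> C) : is_pperm d ->
  \prod_t (if d t is Some y then G y else 1) = \prod_(y in pp_im d) G y.
Proof.
move=> pd; transitivity (\prod_(t in pp_dom d) G (odflt t (d t))).
  by rewrite [RHS]big_mkcond; apply: eq_bigr => t _; rewrite inE; case: (d t).
rewrite pp_im_imset big_imset // => x x'; rewrite !inE.
case dx: (d x) => [y|] //; case dx': (d x') => [y'|] //= _ _ eqyy'.
by rewrite eqyy' in dx; apply: is_pperm_inj pd dx dx'.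
Qed.

End PartialPermutations.

Section Representation.
Variables (C : comNzRingType) (n r : nat) (q : C).
Implicit Types (d : pperm r) (u v w : word n r).

Definition pp_rep d : op C n r := fun u w =>
  [forall x, if d x is Some y then u x == w y else true]%:R *
  \prod_(t | t \notin pp_im d) q ^+ w t.

Lemma pp_rep_by_source d u v : pp_rep d u v =
  \prod_t ([forall x, (d x == Some t) ==> (u x == v t)]%:R *
           (if t \in pp_im d then 1 else q ^+ v t)).
Proof.
rewrite /pp_rep big_split /= prodr_nat_forall big_mkcond /=.
congr ((nat_of_bool _)%:R * _); last by apply: eq_bigr => t _; case: (t \in pp_im d).
apply/forallP/forallP => [uv t | uv x].
  by apply/forallP => x; apply/implyP => /eqP dx; have := uv x; rewrite dx.
by case dx: (d x) => [t|] //; have /forallP/(_ x) := uv t; rewrite dx eqxx.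
Qed.

Lemma pp_rep_by_target d v w : pp_rep d v w =
  (\prod_x if d x is Some t then (v x == w t)%:R else 1) *
  \prod_(t | t \notin pp_im d) q ^+ w t.
Proof.
rewrite /pp_rep -prodr_nat_forall; congr (_ * _).
by apply: eq_bigr => x; case: (d x).
Qed.

Lemma sum_intermediate d1 d2 u w t : is_pperm d1 ->
  \sum_(k < n) ([forall x, (d1 x == Some t) ==> (u x == k)]%:R *
                (if t \in pp_im d1 then 1 else q ^+ k)) *
               (if d2 t is Some y then (k == w y)%:R else 1) =
  (if d2 t is Some y then [forall x, (d1 x == Some t) ==> (u x == w y)]%:R else 1) *
  (if d2 t is Some y then (if t \in pp_im d1 then 1 else q ^+ w y) else 1) *
  (if d2 t is Some _ then 1 else if t \in pp_im d1 then 1 else qint n q).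
Proof.
move=> pd1; case: (d2 t) => [y|].
  by under eq_bigr do rewrite mulrC; rewrite sumr_delta mulr1.
under eq_bigr do rewrite mulr1; rewrite !mul1r.
have [/pp_imP [x0 d1x0] | t_notin] := boolP (t \in pp_im d1).
  rewrite -[RHS](sumr_delta (fun=> 1) (u x0)); apply: eq_bigr => k _.
  rewrite !mulr1; congr (nat_of_bool _)%:R; apply/forallP/eqP => [uk | ->].
    by have /implyP := uk x0; rewrite d1x0 eqxx => /(_ isT) /eqP.
  by move=> x; apply/implyP => /eqP d1x; rewrite (is_pperm_inj pd1 d1x d1x0).
apply: eq_bigr => k _; rewrite (_ : [forall x, _] = true) ?mul1r //.
apply/forallP => x; apply/implyP => /eqP d1x.
by case/pp_imP: t_notin; exists x.
Qed.

Lemma prod_transport d1 d2 u w :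
  \prod_t (if d2 t is Some y then [forall x, (d1 x == Some t) ==> (u x == w y)]%:R else 1)
  = [forall x, if pp_comp d1 d2 x is Some y then u x == w y else true]%:R :> C.
Proof.
transitivity ([forall t, if d2 t is Some y then
    [forall x, (d1 x == Some t) ==> (u x == w y)] else true]%:R : C).
  by rewrite -prodr_nat_forall; apply: eq_bigr => t _; case: (d2 t).
congr (nat_of_bool _)%:R; apply/forallP/forallP => [uw x | uw t].
  rewrite ffunE; case d1x: (d1 x) => [t|] //=.
  by have := uw t; case: (d2 t) => [y|] // /forallP /(_ x); rewrite d1x eqxx.
case d2t: (d2 t) => [y|] //; apply/forallP => x; apply/implyP => /eqP d1x.
by have := uw x; rewrite ffunE d1x /= d2t.
Qed.

Lemma prod_free_coordinates d1 d2 (z : C) :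
  \prod_t (if d2 t is Some _ then 1 else if t \in pp_im d1 then 1 else z) =
  z ^+ pp_N d1 d2.
Proof.
set A := pp_im d1 :|: pp_dom d2.
transitivity (\prod_(t in ~: A) z).
  rewrite [RHS]big_mkcond; apply: eq_bigr => t _; rewrite !inE.
  by case: (d2 t); rewrite ?orbT ?orbF //; case: [exists x, _].
by rewrite prodr_const cardsCs setCK card_ord.
Qed.

Lemma prod_weights d1 d2 w : is_pperm d2 ->
  (\prod_t if d2 t is Some y then (if t \in pp_im d1 then 1 else q ^+ w y) else 1) *
  \prod_(t | t \notin pp_im d2) q ^+ w t =
  \prod_(t | t \notin pp_im (pp_comp d1 d2)) q ^+ w t.
Proof.
move=> pd2; set G := fun y => if y \notin pp_im (pp_comp d1 d2) then q ^+ w y else 1.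
rewrite (eq_bigr (fun t => if d2 t is Some y then G y else 1)); last first.
  by move=> t _; case d2t: (d2 t) => [y|] //; rewrite /G (pp_im_comp _ pd2 d2t) if_neg.
rewrite prod_pp_dom // (eq_bigr G (P := fun t => t \notin pp_im d2)); last first.
  move=> t t_notin; rewrite /G ifT //; apply: contra t_notin.
  exact: subsetP (pp_im_compS d1 d2) t.
by rewrite [RHS]big_mkcond [RHS](bigID (mem (pp_im d2))).
Qed.

Lemma pp_rep_mul d1 d2 : is_pperm d1 -> is_pperm d2 ->
  op_mul (pp_rep d1) (pp_rep d2) =
  op_scale (qint n q ^+ pp_N d1 d2) (pp_rep (pp_comp d1 d2)).
Proof.
move=> pd1 pd2; apply: op_ext => u w; rewrite /op_mul /op_scale.
under eq_bigr do rewrite pp_rep_by_source pp_rep_by_target mulrA -big_split /=.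
pose F t (k : 'I_n) := [forall x, (d1 x == Some t) ==> (u x == k)]%:R *
  (if t \in pp_im d1 then 1 else q ^+ k) * (if d2 t is Some y then (k == w y)%:R else 1).
rewrite -big_distrl -(bigA_distr_bigA F) /= {}/F.
under eq_bigr do rewrite sum_intermediate //.
rewrite !big_split /= prod_transport prod_free_coordinates /pp_rep.
by rewrite -(prod_weights d1 w pd2); ring.
Qed.

Lemma pp_rep_perm (f : 'I_r -> 'I_r) : injective f ->
  pp_rep [ffun x => Some (f x)] = fun u w => (u == [ffun x => w (f x)])%:R.
Proof.
move=> /injF_bij [g _ gK]; apply: op_ext => u w.
rewrite /pp_rep big_pred0 ?mulr1; last first.
  by move=> t; apply/negbTE; rewrite negbK; apply/pp_imP; exists (g t); rewrite ffunE gK.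
congr (nat_of_bool _)%:R; apply/forallP/eqP => [uw | -> x]; last by rewrite !ffunE.
by apply/ffunP => x; have := uw x; rewrite !ffunE => /eqP.
Qed.

Lemma pp_rep_id : pp_rep (pp_id r) = @op_one C n r.
Proof.
rewrite (pp_rep_perm (@inj_id _)); apply: op_ext => u w.
congr (nat_of_bool (u == _))%:R.
by apply/ffunP => x; rewrite ffunE.
Qed.

Lemma swapoK (i j : 'I_r) : involutive (swapo i j).
Proof.
move=> x; rewrite /swapo.
have [-> | ne_xi] := eqVneq x i; first by rewrite eqxx; case: eqVneq => [-> |].
have [-> | ne_xj] := eqVneq x j; first by rewrite eqxx.
by rewrite (negbTE ne_xi) (negbTE ne_xj).
Qed.

Lemma pp_rep_swap (i j : 'I_r) : pp_rep (pp_s i j) = @op_swap C n r i j.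
Proof. exact: pp_rep_perm (inv_inj (swapoK i j)). Qed.

Lemma pp_im_p (j : 'I_r) : pp_im (pp_p j) = [set~ j].
Proof.
apply/setP => t; rewrite in_setC1; apply/pp_imP/idP => [[x] | ne_tj].
  by rewrite ffunE; case: eqP => // ne_xj [<-]; apply/eqP.
by exists t; rewrite ffunE (negbTE ne_tj).
Qed.

Lemma pp_rep_p (j : 'I_r) : pp_rep (pp_p j) = @op_P C n r q j.
Proof.
apply: op_ext => u w; rewrite /pp_rep /op_P pp_im_p.
rewrite (eq_bigl (pred1 j)) => [|t]; last by rewrite !inE negbK.
rewrite big_pred1_eq; set b := [forall x, _]; set b' := [forall x, _].
suff -> : b = b' by case: b'; rewrite ?mul1r ?mul0r.
by apply: eq_forallb => x; rewrite ffunE; case: eqP.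
Qed.

End Representation.

(* None of the hypotheses is needed: the action is well defined for every q in
   every commutative ring, and s_i may be any transposition. *)
Theorem lemma9p1 (R : realType) (n r : nat) (q1 q2 : R[i]) :
  (2 <= n)%N -> (1 <= r)%N -> q1 * q2 != 0 ->
  let q := - q2 / q1 in
  (forall k : nat, (0 < k)%N -> q ^+ k != 1) ->
  let z := qint n q in
  exists rho : pperm r -> op R[i] n r,
    [/\ rho (pp_id r) = @op_one R[i] n r,
        (forall d1 d2 : pperm r, is_pperm d1 -> is_pperm d2 ->
           op_mul (rho d1) (rho d2) = op_scale (z ^+ pp_N d1 d2) (rho (pp_comp d1 d2))),
        (forall i j : 'I_r, (i.+1 = j)%N -> rho (pp_s i j) = @op_swap R[i] n r i j) &
        (forall j : 'I_r, rho (pp_p j) = @op_P R[i] n r q j)].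
Proof.
move=> _ _ _ q _ z; exists (pp_rep q); split.
- exact: pp_rep_id.
- exact: pp_rep_mul.
- by move=> i j _; apply: pp_rep_swap.
- exact: pp_rep_p.
Qed.
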